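(* Consider Setting B with the regular nodes running Algorithm 2, and suppose $\{\mathcal G[k]\}_{k\ge0}$ is jointly strongly $(3f+1)$-robust w.r.t. $\mathcal S$, with $T\in\mathbb N_+$ the interval length from that definition. Then for every $f$-total Byzantine adversarial set and behavior, and every $i\in\mathcal R$: $$\tau_i[k]\neq\omega\ \text{ for all }k\ge (N-|\mathcal S|)T,\qquad\text{and}\qquad \tau_i[k]\le 2(N-|\mathcal S|)T\ \text{ for all }k\ge (N-|\mathcal S|)T.$$
   Context: Setting B. Scalar system $x[k+1]=ax[k]$, $a\in\mathbb R$, monitored by nodes $\mathcal V=\{1,\dots,N\}$ with measurements $y_i[k]=c_ix[k]$, $c_i\in\mathbb R$. Source set $\mathcal S=\{i\in\mathcal V:c_i\neq0\}$. Time-varying directed graphs $\mathcal G[k]=(\mathcal V,\mathcal E[k])$, $\mathcal N_i[k]=\{l\ne i:(l,i)\in\mathcal E[k]\}$; the union graph over an interval has the union of the edge sets. An unknown set $\mathcal A\subseteq\mathcal V$ of adversarial nodes with $|\mathcal A|\le f$ ($f$-total model; $\mathcal A$ may intersect $\mathcal S$); $\mathcal R=\mathcal V\setminus\mathcal A$ are regular. Adversaries are Byzantine: at each time they may send arbitrary, possibly different values (of both estimate and freshness index) to different out-neighbors, or send nothing, and may collude. At each time $k$, each node $l$ sends to its out-neighbors a pair (estimate, freshness index); regular $l$ sends its true $(\hat x_l[k],\tau_l[k])$. Algorithm 2 (executed by regular nodes). Regular source $i\in\mathcal S$: $\tau_i[k]=0$ for all $k$ and $\hat x_i[k+1]=a\hat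 x_i[k]+l_i(y_i[k]-c_i\hat x_i[k])$ with observer gain $l_i$. Regular non-source $i$: keeps $\hat x_i[k]$ (arbitrary initial), $\tau_i[k]\in\mathbb N\cup\{\omega\}$ with $\tau_i[0]=\omega$, and a list $\mathcal M_i$ of distinct node labels (initially empty, at most $2f+1$ entries, stored in $2f+1$ slots) with, for each $l\in\mathcal M_i$, a stored estimate $v_{i,l}$, stored index $d_{i,l}\in\mathbb N$ and time stamp $\phi_{i,l}$. At time $k$ let $\mathcal J_i[k]$ be the set of $l\in\mathcal N_i[k]$ whose reported index $\tau_l[k]$ lies in $\mathbb N$ and satisfies $\tau_l[k]\le k$. ''Appending $l$ at time $k$'' means: put $l$ in $\mathcal M_i$ (if absent), set $v_{i,l}=\hat x_l[k]$, $d_{i,l}=\tau_l[k]$ (reported values), $\phi_{i,l}=k$. Filtering update (F) at time $k$ (requires $|\mathcal M_i|=2f+1$): set $\tau_i[k+1]=\max_{l\in\mathcal M_i}d_{i,l}+1$; form $\bar x_{i,l}[k]=a^{k-\phi_{i,l}}v_{i,l}$ for $l\in\mathcal M_i$; discard the $f$ largest and $f$ smallest of these $2f+1$ values, call the remaining one $\bar x_i[k]$, and set $\hat x_i[k+1]=a\bar x_i[k]$. Case $\tau_i[k]=\omega$: let $\mathcal J'=\mathcal J_i[k]\setminus\mathcal M_i$. If $|\mathcal M_i|+|\mathcal J'|<2f+1$, append every $l\in\mathcal J'$, set $\tau_i[k+1]=\omega$ and $\hat x_i[k+1]=a\hat x_i[k]$. Otherwise append the $2f+1-|\mathcal M_i|$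 nodes of $\mathcal J'$ with smallest reported indices (ties broken arbitrarily) and perform (F). Case $\tau_i[k]\ne\omega$: for each $l\in\mathcal J_i[k]\cap\mathcal M_i$ with reported $\tau_l[k]<d_{i,l}$, append $l$ (refreshing its entries); then rank the nodes of $\mathcal M_i\cup(\mathcal J_i[k]\setminus\mathcal M_i)$ by index ($d_{i,l}$ for $l\in\mathcal M_i$, reported $\tau_l[k]$ otherwise), keep the $2f+1$ with smallest index (ties arbitrary), appending newcomers and deleting dropped nodes (a retained node keeps its storage slot; a newcomer occupies the slot of a dropped node), and perform (F). In all cases, after the step every stored $d_{i,l}$ is incremented by $1$, and $\mathcal M_i$, $v$, $\phi$ carry over to time $k+1$. Definitions. For a graph $\mathcal G=(\mathcal V,\mathcal E)$ with in-neighbor sets $\mathcal N_i$ and $r\in\mathbb N_+$, a set $\mathcal C\subseteq\mathcal V$ is $r$-reachable if some $i\in\mathcal C$ has $|\mathcal N_i\setminus\mathcal C|\ge r$. $\mathcal G$ is strongly $r$-robust w.r.t. $\mathcal S\subset\mathcal V$ if every nonempty $\mathcal C\subseteq\mathcal V\setminus\mathcal S$ is $r$-reachable. A sequence $\{\mathcal G[k]\}$ is jointly strongly $r$-robust w.r.t. $\mathcal S$ if there is $T\in\mathbb N_+$ such that the union graph over $[kT,(k+1)T-1]$ is strongly $r$-robust w.r.t. $\mathcal S$ for every $k\in\mathbb N$. *)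

From HB Require Import structures.
From mathcomp Require Import all_boot all_order all_algebra.
Set Implicit Arguments. Unset Strict Implicit. Unset Printing Implicit Defensive.
Import Order.TTheory GRing.Theory Num.Theory.
Local Open Scope ring_scope.

(* A directed graph on nodes 'I_N is a relation E; E l i means (l,i) is an edge. *)
Definition in_nbrs (N : nat) (E : rel 'I_N) (i : 'I_N) : {set 'I_N} :=
  [set l | (l != i) && E l i].

Definition union_graph (N : nat) (G : nat -> rel 'I_N) (k0 len : nat) : rel 'I_N :=
  fun l i => has (fun k => G k l i) (iota k0 len).

Definition r_reachable (N : nat) (E : rel 'I_N) (C : {set 'I_N}) (r : nat) : bool :=
  [exists i in C, (r <= #|in_nbrs E i :\: C|)%N].

Definition strongly_robust (N : nat) (E : rel 'I_N) (S : {set 'I_N}) (r : nat) : Prop :=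
  forall C : {set 'I_N}, C != set0 -> C \subset ~: S -> r_reachable E C r.

Definition jointly_strongly_robust_with (N : nat) (G : nat -> rel 'I_N)
    (S : {set 'I_N}) (r T : nat) : Prop :=
  (0 < T)%N /\ forall m : nat, strongly_robust (union_graph G (m * T) T) S r.

(* Freshness indices live in option nat; None stands for omega. *)
Definition message (R : Type) := option (R * option nat).

(* Memory of a non-source node: for each label l, either absent (None) or
   Some (v_{i,l}, d_{i,l}, phi_{i,l}). *)
Definition memory (R : Type) (N : nat) := 'I_N -> option (R * nat * nat).

Section Alg.
Variables (R : realFieldType) (N : nat).

Definition ent_v (e : option (R * nat * nat)) : R :=
  if e is Some (v, _, _) then v else 0.
Definition ent_d (e : option (R * nat * nat)) : nat :=
  if e is Some (_, d, _) then d else 0%N.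
Definition ent_phi (e : option (R * nat * nat)) : nat :=
  if e is Some (_, _, p) then p else 0%N.

Definition dom (m : memory R N) : {set 'I_N} := [set l | m l != None].

Definition incr (m : memory R N) : memory R N :=
  fun l => if m l is Some (v, d, p) then Some (v, d.+1, p) else None.

Definition append (m : memory R N) (B : {set 'I_N}) (rv : 'I_N -> R)
    (rd : 'I_N -> nat) (k : nat) : memory R N :=
  fun l => if l \in B then Some (rv l, rd l, k) else m l.

Definition reported (msg : message R) : option (R * nat) :=
  if msg is Some (v, Some d) then Some (v, d) else None.

Definition rep_v (msg : message R) : R :=
  if reported msg is Some (v, _) then v else 0.
Definition rep_d (msg : message R) : nat :=
  if reported msg is Some (_, d) then d else 0%N.

Definition Jset (G : nat -> rel 'I_N) (msgs : nat -> 'I_N -> 'I_N -> message R)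
    (k : nat) (i : 'I_N) : {set 'I_N} :=
  [set l in in_nbrs (G k) i |
     if reported (msgs k l i) is Some (_, d) then (d <= k)%N else false].

(* discard the f largest and f smallest of 2f+1 values: the remaining one *)
Definition trimmed (f : nat) (s : seq R) : R := nth 0 (sort (fun x y => x <= y) s) f.

Definition filt_tau (m1 : memory R N) : option nat :=
  Some (\max_(l in dom m1) ent_d (m1 l)).+1.
Definition filt_x (a : R) (f k : nat) (m1 : memory R N) : R :=
  a * trimmed f [seq a ^+ (k - ent_phi (m1 l)) * ent_v (m1 l) | l <- enum (dom m1)].

(* one step of a regular non-source node at time k: from state (x, t, m) to
   (x', t', m'); J is J_i[k], rv / rd the reported estimates / indices.
   Ties are broken arbitrarily, hence a relation. *)
Definition nonsource_step (a : R) (f k : nat) (J : {set 'I_N})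
    (rv : 'I_N -> R) (rd : 'I_N -> nat)
    (x : R) (t : option nat) (m : memory R N)
    (x' : R) (t' : option nat) (m' : memory R N) : Prop :=
  match t with
  | None =>
      let J' := J :\: dom m in
      if (#|dom m| + #|J'| < (2 * f).+1)%N then
        [/\ m' = incr (append m J' rv rd k), t' = None & x' = a * x]
      else exists B : {set 'I_N},
        [/\ B \subset J', #|B| = ((2 * f).+1 - #|dom m|)%N,
            {in B & J' :\: B, forall l l', (rd l <= rd l')%N} &
            let m1 := append m B rv rd k in
            [/\ m' = incr m1, t' = filt_tau m1 & x' = filt_x a f k m1]]
  | Some _ =>
      let m0 := append m [set l in J :&: dom m | (rd l < ent_d (m l))%N] rv rd k in
      let C := dom m0 :|: J in
      let idx l := if l \in dom m0 then ent_d (m0 l) else rd l in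
      exists K : {set 'I_N},
        [/\ K \subset C, #|K| = (2 * f).+1,
            {in K & C :\: K, forall l l', (idx l <= idx l')%N} &
            let m1 : memory R N := fun l =>
              if l \in K then (if l \in dom m0 then m0 l else Some (rv l, rd l, k))
              else None in
            [/\ m' = incr m1, t' = filt_tau m1 & x' = filt_x a f k m1]]
  end.

(* An execution of Algorithm 2 by the regular nodes (nodes not in Adv), with
   arbitrary (Byzantine) messages msgs k l i sent by l to i at time k from
   adversarial nodes. xs is the true state, xh / tau / mem the node variables. *)
Definition execution (f : nat) (a : R) (c L : 'I_N -> R) (G : nat -> rel 'I_N)
    (Adv : {set 'I_N}) (xs : nat -> R)
    (msgs : nat -> 'I_N -> 'I_N -> message R)
    (xh : 'I_N -> nat -> R) (tau : 'I_N -> nat -> option nat)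
    (mem : 'I_N -> nat -> memory R N) : Prop :=
  [/\ (forall k, xs k.+1 = a * xs k),
      (forall k l i, l \notin Adv -> l \in in_nbrs (G k) i ->
          msgs k l i = Some (xh l k, tau l k)),
      (forall i, i \notin Adv -> c i != 0 -> forall k,
          tau i k = Some 0%N /\
          xh i k.+1 = a * xh i k + L i * (c i * xs k - c i * xh i k)),
      (forall i, i \notin Adv -> c i == 0 ->
          tau i 0%N = None /\ mem i 0%N = (fun _ => None)) &
      (forall i, i \notin Adv -> c i == 0 -> forall k,
          nonsource_step a f k (Jset G msgs k i)
            (fun l => rep_v (msgs k l i)) (fun l => rep_d (msgs k l i))
            (xh i k) (tau i k) (mem i k) (xh i k.+1) (tau i k.+1) (mem i k.+1))].

End Alg.

Definition sources (R : realFieldType) (N : nat) (c : 'I_N -> R) : {set 'I_N} :=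
  [set i | c i != 0].

From HB Require Import structures.
From mathcomp Require Import all_boot all_order all_algebra.
From mathcomp Require Import zify.
Set Implicit Arguments. Unset Strict Implicit. Unset Printing Implicit Defensive.
Import Order.TTheory GRing.Theory Num.Theory.

(* While a regular non-source node has τ = ω it stores every node with a natural
   index that it hears from; once it holds 2f+1 of them it leaves ω, and from then on
   its index is one more than the largest of its 2f+1 stored indices.

   Call a regular non-source node stuck at time t if τ = ω (first claim), resp. if
   fewer than 2f+1 of its stored entries have index at most t - pT (second claim,
   for p ≥ N - |S|).  The set of stuck nodes never grows, and if it is unchanged over
   a window of length T, strong (3f+1)-robustness of the window's union graph yields
   a stuck node that hears, during the window, from at least 2f+1 regular nodes that
   are not stuck.  Those are sources or already report good indices, and the filtering
   rule keeps them, so the node is unstuck at the end of the window: a contradiction.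
   Hence the stuck set shrinks in every window and is empty after N - |S| windows.
   Choosing p = ⌊k/T⌋ - (N - |S|) then gives τ_i[k] ≤ k - pT < (N - |S| + 1) T. *)

Local Open Scope nat_scope.

Lemma leq_ind_from (P : nat -> Prop) t0 :
  P t0 -> (forall t, t0 <= t -> P t -> P t.+1) -> forall t, t0 <= t -> P t.
Proof.
move=> H0 HS t /subnK <-; elim: (t - t0) => [|j IH]; first by rewrite add0n.
by rewrite addSn; apply: HS; rewrite ?leq_addl.
Qed.

Lemma cardsU_subsetC (T : finType) (A B : {set T}) :
  B \subset ~: A -> #|A :|: B| = #|A| + #|B|.
Proof.
by move=> BA; apply/eqP; rewrite (leq_card_setU A B).2 disjoint_sym disjoints_subset.
Qed.

Section Memory.
Variables (R : realFieldType) (N f : nat) (a : R).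
Implicit Types (m : memory R N) (B J : {set 'I_N}) (rv : 'I_N -> R) (rd : 'I_N -> nat).

Lemma in_dom m l : (l \in dom m) = (m l != None).
Proof. by rewrite inE. Qed.

Lemma dom_incr m : dom (incr m) = dom m.
Proof. by apply/setP => l; rewrite !inE /incr; case: (m l) => [[[v d] p]|]. Qed.

Lemma dom_append m B rv rd k : dom (append m B rv rd k) = dom m :|: B.
Proof. by apply/setP => l; rewrite !inE /append; case: (l \in B); rewrite ?orbT ?orbF. Qed.

Lemma ent_d_incr m l : l \in dom m -> ent_d (incr m l) = (ent_d (m l)).+1.
Proof. by rewrite in_dom /incr; case: (m l) => [[[v d] p]|]. Qed.

Definition indices_le k m := forall l, l \in dom m -> ent_d (m l) <= k.

Lemma indices_le_append k m B rv rd :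
  indices_le k m -> {in B, forall l, rd l <= k} -> indices_le k (append m B rv rd k).
Proof.
move=> Hm HB l; rewrite dom_append inE /append.
by case: ifP => [/HB //|_]; rewrite orbF; apply: Hm.
Qed.

Lemma indices_le_incr k m : indices_le k m -> indices_le k.+1 (incr m).
Proof. by move=> Hm l; rewrite dom_incr => Hl; rewrite ent_d_incr // ltnS Hm. Qed.

Definition tau_spec m (t : option nat) :=
  forall d, t = Some d -> #|dom m| = (2 * f).+1 /\ forall e, indices_le e m -> d <= e.

Lemma tau_spec_filt m : #|dom m| = (2 * f).+1 -> tau_spec (incr m) (filt_tau m).
Proof.
move=> Hcard d [<-]; rewrite dom_incr; split => // e He.
have [l0 Hl0] : exists l0, l0 \in dom m by apply/card_gt0P; rewrite Hcard.
case: e He => [|e] He; first by have := He l0; rewrite dom_incr ent_d_incr // => /(_ Hl0).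
rewrite ltnS; apply/bigmax_leqP => l Hl.
by have := He l; rewrite dom_incr ent_d_incr // ltnS; apply.
Qed.

Lemma nonsource_step_none k J rv rd x m x' t' m' :
  {in J, forall l, rd l <= k} ->
  nonsource_step a f k J rv rd x None m x' t' m' ->
  indices_le k m -> #|dom m| <= 2 * f ->
  [/\ indices_le k.+1 m', tau_spec m' t', (t' = None -> #|dom m'| <= 2 * f)
    & (t' = None -> dom m :|: J \subset dom m')].
Proof.
move=> HJ /=; set J' := J :\: dom m.
have HJ' : J' \subset ~: dom m by apply/subsetP => l; rewrite !inE => /andP [].
case: ifP => Hlt.
  move=> [-> -> _] Hm _; split => // [|_|_].
  - by apply/indices_le_incr/indices_le_append => // l; rewrite inE => /andP [_ /HJ].
  - by rewrite dom_incr dom_append cardsU_subsetC.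
  - by apply/subsetP => l; rewrite dom_incr dom_append !inE; case: (m l != None).
case=> B [HB HBc _ /= [-> -> _]] Hm Hcard; split => //.
- apply/indices_le_incr/indices_le_append => // l /(subsetP HB).
  by rewrite inE => /andP [_ /HJ].
- apply: tau_spec_filt; rewrite dom_append cardsU_subsetC ?HBc.
    exact: subnKC (leqW Hcard).
  exact: subset_trans HB HJ'.
Qed.

Lemma nonsource_step_some k J rv rd x d m x' t' m' :
  {in J, forall l, rd l <= k} ->
  nonsource_step a f k J rv rd x (Some d) m x' t' m' ->
  indices_le k m -> [/\ indices_le k.+1 m', tau_spec m' t' & t' <> None].
Proof.
move=> HJ [K [HKC HKc _ /= [-> -> _]]] Hm.
set m0 := append m _ rv rd k in HKC *; set m1 := (fun l => _).
have Hdom1 : dom m1 = K.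
  apply/setP => l; rewrite [in LHS]inE /m1; case: ifP => // _.
  by case: ifP => //; rewrite in_dom.
have Hm0 : indices_le k m0.
  by apply: indices_le_append => // l; rewrite !inE => /andP [/andP [/HJ]].
split => //; last by apply: tau_spec_filt; rewrite Hdom1.
apply: indices_le_incr => l; rewrite Hdom1 => HlK; rewrite /m1 HlK.
case: ifP => [/Hm0 //|Hn]; apply: HJ.
by move/subsetP: HKC => /(_ l HlK); rewrite inE Hn.
Qed.

Definition fresh_entries s k m := [set l in dom m | ent_d (m l) + s <= k].

Lemma nonsource_step_fresh s k J rv rd x d m x' t' m' :
  nonsource_step a f k J rv rd x (Some d) m x' t' m' ->
  dom m' \subset fresh_entries s k.+1 m' \/
  fresh_entries s k m :|: [set l in J | rd l + s <= k] \subset fresh_entries s k.+1 m'.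
Proof.
(* Either some dropped candidate is fresh, and then so is every retained one, or no
   fresh candidate is dropped. *)
case=> K [HKC _ HKo /= [-> _ _]].
set m0 := append m _ rv rd k in HKC HKo *; set m1 := (fun l => _).
pose idx l := if l \in dom m0 then ent_d (m0 l) else rd l.
have Hdom0 : dom m0 = dom m.
  apply/setP => l; rewrite dom_append !inE.
  by case: (m l != None); rewrite ?andbF.
have HK l : l \in K -> l \in dom m1 /\ ent_d (m1 l) = idx l.
  by move=> Hl; rewrite in_dom /m1 /idx Hl; case: ifP; rewrite // in_dom.
have Hidx l : l \in dom m -> idx l <= ent_d (m l).
  rewrite /idx Hdom0 => Hl; rewrite Hl /m0 /append inE.
  by case: ifP => // /andP [_ /ltnW].
have HidxJ l : l \in J -> idx l <= rd l.
  rewrite /idx Hdom0 => HlJ; case: ifP => // Hl.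
  by rewrite /m0 /append in_set in_setI HlJ Hl /=; case: ltnP.
have Hfresh l : l \in K -> idx l + s <= k -> l \in fresh_entries s k.+1 (incr m1).
  by move=> /HK [Hl He] Hs; rewrite in_set dom_incr Hl /= ent_d_incr // He addSn ltnS.
have [/exists_inP [y Hy Hys]|/exists_inPn Hnone] :=
  boolP [exists l in (dom m0 :|: J) :\: K, idx l + s <= k].
- left; apply/subsetP => l; rewrite dom_incr => Hl.
  have HlK : l \in K by move: Hl; rewrite in_dom /m1; case: (l \in K).
  by apply: Hfresh => //; apply: leq_trans Hys; rewrite leq_add2r HKo.
- right; apply/subsetP => l Hl.
  have [HlC Hls] : l \in dom m0 :|: J /\ idx l + s <= k.
    move: Hl; rewrite Hdom0 !inE -!in_dom => /orP [/andP [Hl Hs]|/andP [Hl Hs]].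
      by rewrite Hl; split => //; apply: leq_trans Hs; rewrite leq_add2r Hidx.
    by rewrite Hl orbT; split => //; apply: leq_trans Hs; rewrite leq_add2r HidxJ.
  suff HlK : l \in K by exact: Hfresh.
  apply/negPn/negP => HlK.
  by move: (Hnone l); rewrite in_setD HlK HlC Hls => /(_ isT).
Qed.

End Memory.

Lemma shrinking_sets_empty (V : finType) (U : {set V}) (W : nat -> {set V}) :
  (forall q, W q \subset U) -> (forall q, W q.+1 != set0 -> W q.+1 \proper W q) ->
  W #|U| = set0.
Proof.
move=> WU Wshrink.
have Hcount j : W j = set0 \/ #|W j| + j <= #|U|.
  elim: j => [|j [IH|IH]]; first by right; rewrite addn0 subset_leq_card.
  - by left; have [//|/Wshrink/proper_card] := eqVneq (W j.+1) set0; rewrite IH cards0.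
  - have [->|/Wshrink /proper_card] := eqVneq (W j.+1) set0; [by left | right; lia].
have [//|] := Hcount #|U|; rewrite -[X in _ <= X]add0n leq_add2r leqn0 cards_eq0.
by move/eqP.
Qed.

Lemma window_collect (N : nat) (E : nat -> rel 'I_N) (P : nat -> {set 'I_N})
    (Z : {set 'I_N}) i t0 len :
  (forall t, t0 <= t < t0 + len ->
     P t :|: [set z in Z | z \in in_nbrs (E t) i] \subset P t.+1) ->
  (forall z, z \in Z -> exists2 u, t0 <= u < t0 + len & z \in in_nbrs (E u) i) ->
  Z \subset P (t0 + len).
Proof.
move=> Hstep Hsend.
suff Hj j : j <= len -> forall z u, z \in Z -> t0 <= u < t0 + j ->
    z \in in_nbrs (E u) i -> z \in P (t0 + j).
  by apply/subsetP => z Hz; have [u Hu Hzu] := Hsend z Hz; apply: Hj Hz Hu Hzu.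
elim: j => [|j IH] Hj z u Hz Hu Hzu; first lia.
rewrite addnS; apply: (subsetP (Hstep _ _)); first lia.
have [Hlt|Hge] := ltnP u (t0 + j); first by rewrite in_setU (IH (ltnW Hj) z u Hz _ Hzu) //; lia.
have <- : u = t0 + j by lia.
by rewrite in_setU in_set Hz Hzu orbT.
Qed.

Section Execution.
Variables (R : realFieldType) (N f : nat) (a : R) (c L : 'I_N -> R)
  (G : nat -> rel 'I_N) (Adv : {set 'I_N}) (xs : nat -> R)
  (msgs : nat -> 'I_N -> 'I_N -> message R)
  (xh : 'I_N -> nat -> R) (tau : 'I_N -> nat -> option nat)
  (mem : 'I_N -> nat -> memory R N).
Hypothesis exec : execution f a c L G Adv xs msgs xh tau mem.

Notation J k i := (Jset G msgs k i).
Notation rd k i := (fun l => rep_d (msgs k l i)).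

Lemma Jset_rep_d_le k i : {in J k i, forall l, rd k i l <= k}.
Proof. by move=> l; rewrite inE /rep_d => /andP [_]; case: reported => [[v d]|]. Qed.

Lemma regular_sender_in_Jset k l i d : l \notin Adv -> l \in in_nbrs (G k) i ->
  tau l k = Some d -> d <= k -> l \in J k i /\ rd k i l = d.
Proof.
case: exec => _ Hmsg _ _ _ Hl Hli Hd Hdk.
by rewrite /Jset inE Hli /= /rep_d (Hmsg _ _ _ Hl Hli) Hd.
Qed.

Lemma exec_source_tau i k : i \notin Adv -> c i != 0%R -> tau i k = Some 0.
Proof. by case: exec => _ _ Hsrc _ _ Hi Hc; case: (Hsrc i Hi Hc k). Qed.

Lemma exec_nonsource_step i k : i \notin Adv -> c i == 0%R ->
  nonsource_step a f k (J k i) (fun l => rep_v (msgs k l i)) (rd k i)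
    (xh i k) (tau i k) (mem i k) (xh i k.+1) (tau i k.+1) (mem i k.+1).
Proof. by case: exec => _ _ _ _ Hstep Hi Hc; apply: Hstep. Qed.

Lemma exec_nonsource_invariant i k : i \notin Adv -> c i == 0%R ->
  [/\ indices_le k (mem i k), (tau i k = None -> #|dom (mem i k)| <= 2 * f)
    & tau_spec f (mem i k) (tau i k)].
Proof.
move=> Hi Hc; case: exec => _ _ _ Hinit _; have [Ht0 Hm0] := Hinit i Hi Hc.
elim: k => [|k [Hind Hcard _]].
  have Hdom : dom (mem i 0) = set0 by apply/setP => l; rewrite Hm0 !inE.
  by rewrite Ht0; split => [l|_|//]; rewrite Hdom ?inE ?cards0.
have := exec_nonsource_step k Hi Hc; have HJ := @Jset_rep_d_le k i.
case: (tau i k) Hcard => [d|] Hcard Hstep.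
  by case: (nonsource_step_some HJ Hstep Hind).
by case: (nonsource_step_none HJ Hstep Hind (Hcard erefl)).
Qed.

Lemma exec_tau_le l k d : l \notin Adv -> tau l k = Some d -> d <= k.
Proof.
move=> Hl Hd; have [Hc|Hc] := boolP (c l == 0%R).
  by have [Hind _ /(_ d Hd) [_]] := exec_nonsource_invariant k Hl Hc; apply.
by move: Hd; rewrite exec_source_tau // => -[<-].
Qed.

Lemma exec_tau_some_succ l k : l \notin Adv -> tau l k <> None -> tau l k.+1 <> None.
Proof.
move=> Hl; have [Hc|Hc] := boolP (c l == 0%R); last by move=> _; rewrite exec_source_tau.
have [Hind _ _] := exec_nonsource_invariant k Hl Hc.
have := exec_nonsource_step k Hl Hc; have HJ := @Jset_rep_d_le k l.
by case: (tau l k) => [d|] // Hstep _; have [] := nonsource_step_some HJ Hstep Hind.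
Qed.

Definition fresh_full s t j := (2 * f).+1 <= #|fresh_entries s t (mem j t)|.

Lemma exec_fresh_step s i k : i \notin Adv -> c i == 0%R -> tau i k <> None ->
  fresh_full s k.+1 i \/
  fresh_entries s k (mem i k) :|: [set l in J k i | rd k i l + s <= k]
    \subset fresh_entries s k.+1 (mem i k.+1).
Proof.
move=> Hi Hc Ht; have Ht' := exec_tau_some_succ Hi Ht.
have := exec_nonsource_step k Hi Hc; case: (tau i k) Ht => [d|] // _ Hstep.
have [Hfull|] := nonsource_step_fresh s Hstep; [left | by right].
have [_ _ Hspec] := exec_nonsource_invariant k.+1 Hi Hc.
rewrite /fresh_full; case: (tau i k.+1) Ht' Hspec => [d'|] // _ /(_ d' erefl) [<- _].
exact: subset_leq_card.
Qed.

Lemma fresh_full_succ s i k : i \notin Adv -> c i == 0%R -> tau i k <> None ->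
  fresh_full s k i -> fresh_full s k.+1 i.
Proof.
move=> Hi Hc Ht Hfull; have [//|Hsub] := exec_fresh_step s Hi Hc Ht.
apply: leq_trans Hfull (subset_leq_card (subset_trans _ Hsub)); exact: subsetUl.
Qed.

Lemma fresh_full_tau s i k d : i \notin Adv -> c i == 0%R -> fresh_full s k i ->
  tau i k = Some d -> d + s <= k.
Proof.
move=> Hi Hc Hfull Hd; have [_ _ /(_ d Hd) [Hcard Hbound]] := exec_nonsource_invariant k Hi Hc.
have Hsub : fresh_entries s k (mem i k) \subset dom (mem i k).
  by apply/subsetP => l; rewrite in_set => /andP [].
have Heq : fresh_entries s k (mem i k) = dom (mem i k).
  by apply/eqP; rewrite eqEcard Hsub Hcard.
have [l0 Hl0] : exists l0, l0 \in fresh_entries s k (mem i k).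
  by apply/card_gt0P; apply: leq_trans Hfull.
suff : d <= k - s by move: Hl0; rewrite in_set => /andP [_]; lia.
by apply: Hbound => l; rewrite -Heq in_set => /andP [_]; lia.
Qed.

Lemma exec_tau_some_le l t0 t : l \notin Adv -> t0 <= t -> tau l t0 <> None -> tau l t <> None.
Proof.
by move=> Hl Ht H0; move: t Ht; apply: leq_ind_from => // t' _; apply: exec_tau_some_succ.
Qed.

Lemma fresh_full_le s j t0 t : j \notin Adv -> c j == 0%R ->
  (forall t', t0 <= t' -> tau j t' <> None) -> t0 <= t ->
  fresh_full s t0 j -> fresh_full s t j.
Proof.
move=> Hj Hc Hsome Ht H0; move: t Ht; apply: leq_ind_from => // t' Ht'.
exact: fresh_full_succ (Hsome _ Ht').
Qed.

Variable T : nat.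
Hypothesis robust :
  forall q, strongly_robust (union_graph G (q * T) T) (sources c) (3 * f).+1.
Hypothesis Adv_le : #|Adv| <= f.

Lemma robust_regular_senders (W : {set 'I_N}) q : W != set0 -> W \subset ~: sources c ->
  exists2 i, i \in W & exists Z : {set 'I_N},
    [/\ (2 * f).+1 <= #|Z|, Z \subset ~: Adv, Z \subset ~: W
      & forall z, z \in Z -> exists2 u, q * T <= u < q * T + T & z \in in_nbrs (G u) i].
Proof.
move=> Wne WS; have /existsP [i /andP [HiW Hcard]] := robust q Wne WS.
exists i => //; set A := in_nbrs _ i :\: W in Hcard; exists (A :\: Adv); split.
- have : #|A :&: Adv| <= #|Adv| by apply/subset_leq_card/subsetIr.
  rewrite cardsD; lia.
- by apply/subsetP => z; rewrite !inE => /andP [].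
- by apply/subsetP => z; rewrite !inE => /andP [_ /andP []].
- move=> z; rewrite !inE => /andP [_ /andP [_ /andP [Hzi]]].
  case/hasP => u; rewrite mem_iota => Hu Hg.
  by exists u => //; rewrite inE Hzi.
Qed.

Lemma stuck_sets_empty (W : nat -> {set 'I_N}) p :
  (forall t, p * T <= t -> W t.+1 \subset W t) ->
  (forall t, W t \subset ~: sources c) ->
  (forall q i (Z : {set 'I_N}), p <= q -> i \in W (q.+1 * T) -> (2 * f).+1 <= #|Z| ->
     Z \subset ~: Adv -> Z \subset ~: W (q * T) ->
     (forall z, z \in Z -> exists2 u, q * T <= u < q * T + T & z \in in_nbrs (G u) i) ->
     False) ->
  W ((p + #|~: sources c|) * T) = set0.
Proof.
move=> Wdecr WS Wstuck.
have Wle t1 : p * T <= t1 -> forall t2, t1 <= t2 -> W t2 \subset W t1.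
  move=> Ht1; apply: leq_ind_from => [|t Ht HWt]; first exact: subxx.
  by apply: subset_trans HWt; apply: Wdecr; apply: leq_trans Ht.
apply: (@shrinking_sets_empty _ _ (fun q => W ((p + q) * T))) => // q Wne.
rewrite properEneq addnS in Wne *; apply/andP; split.
  apply/negP => /eqP Weq; rewrite Weq in Wne.
  have [i HiW [Z [HZc HZA HZW HZsend]]] := robust_regular_senders (p + q) Wne (WS _).
  by apply: (Wstuck (p + q) i Z) => //; [exact: leq_addr | rewrite Weq].
by apply: Wle; rewrite ?leq_mul2r ?leq_addr ?leqnSn ?orbT.
Qed.

Definition omega_nodes t := [set j | (j \notin Adv) && (c j == 0%R) && (tau j t == None)].

Lemma omega_nodes_sub t : omega_nodes t \subset ~: sources c.
Proof. by apply/subsetP => j; rewrite !inE => /andP [/andP [_ ->]]. Qed.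

Lemma exec_tau_some_from l t0 t : l \notin Adv -> l \notin omega_nodes t0 -> t0 <= t ->
  tau l t <> None.
Proof.
move=> Hl Hnw Ht; have [Hc|Hc] := boolP (c l == 0%R); last by rewrite exec_source_tau.
by apply: exec_tau_some_le Ht _ => //; apply/eqP; move: Hnw; rewrite !inE Hl Hc.
Qed.

Lemma omega_nodes_empty : omega_nodes (#|~: sources c| * T) = set0.
Proof.
apply: (@stuck_sets_empty _ 0) => [t _ | t | q i Z _ HiW HZc HZA HZW HZsend].
- apply/subsetP => j; rewrite !inE => /andP [/andP [Hj ->]] /eqP Hnone.
  by rewrite Hj /=; apply/negPn/negP => /eqP /(exec_tau_some_succ Hj).
- exact: omega_nodes_sub.
move: HiW; rewrite inE mulSnr => /andP [/andP [Hi Hc] /eqP Hnone].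
have Hwait t : t <= q * T + T -> tau i t = None.
  by move=> Ht; apply/eqP/negPn/negP => /eqP /(exec_tau_some_le Hi Ht).
have Hcollect : Z \subset dom (mem i (q * T + T)).
  apply: (window_collect (P := fun t => dom (mem i t))) HZsend => t /andP [Htq HtT].
  have [Hind Hcard _] := exec_nonsource_invariant t Hi Hc.
  have Ht := Hwait t (ltnW HtT).
  have := exec_nonsource_step t Hi Hc; rewrite Ht => Hstep.
  have [_ _ _ Hdom] := nonsource_step_none (@Jset_rep_d_le t i) Hstep Hind (Hcard Ht).
  apply: subset_trans (Hdom (Hwait _ HtT)); apply: setUS; apply/subsetP => z.
  rewrite inE => /andP [Hz Hzi].
  have Hza : z \notin Adv by move/subsetP: HZA => /(_ z Hz); rewrite inE.
  have Hzw : z \notin omega_nodes (q * T) by move/subsetP: HZW => /(_ z Hz); rewrite inE.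
  case Hd: (tau z t) (exec_tau_some_from Hza Hzw Htq) => [d|] // _.
  by have [] := regular_sender_in_Jset Hza Hzi Hd (exec_tau_le Hza Hd).
have [_ Hcard _] := exec_nonsource_invariant (q * T + T) Hi Hc.
have := leq_trans HZc (subset_leq_card Hcollect).
by rewrite ltnNge Hcard.
Qed.

Lemma exec_tau_some i k : i \notin Adv -> #|~: sources c| * T <= k -> tau i k <> None.
Proof. by move=> Hi; apply: exec_tau_some_from Hi _; rewrite omega_nodes_empty inE. Qed.

Section Freshness.
Variable p : nat.
Hypothesis p_ge : #|~: sources c| <= p.

Lemma exec_tau_some_late i t : i \notin Adv -> p * T <= t -> tau i t <> None.
Proof. by move=> Hi Ht; apply: exec_tau_some Hi (leq_trans (leq_mul p_ge _) Ht). Qed.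

Definition unfresh_nodes t :=
  [set j | (j \notin Adv) && (c j == 0%R) && ~~ fresh_full (p * T) t j].

Lemma fresh_sender z t0 t : z \notin Adv -> z \notin unfresh_nodes t0 -> p * T <= t0 <= t ->
  exists2 d, tau z t = Some d & d + p * T <= t.
Proof.
move=> Hz Hzu /andP [Ht0 Ht]; have [Hc|Hc] := boolP (c z == 0%R); last first.
  by exists 0; rewrite ?exec_source_tau // (leq_trans Ht0 Ht).
have Hfull : fresh_full (p * T) t z.
  apply: (fresh_full_le Hz Hc _ Ht) => [t' Ht'|].
    exact: exec_tau_some_late (leq_trans Ht0 Ht').
  by move: Hzu; rewrite !inE Hz Hc negbK.
case Hd: (tau z t) (exec_tau_some_late Hz (leq_trans Ht0 Ht)) => [d|] // _.
by exists d => //; apply: fresh_full_tau Hz Hc Hfull Hd.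
Qed.

Lemma unfresh_nodes_empty : unfresh_nodes ((p + #|~: sources c|) * T) = set0.
Proof.
apply: stuck_sets_empty => [t Ht | t | q i Z Hq HiW HZc HZA HZW HZsend].
- apply/subsetP => j; rewrite !inE => /andP [/andP [Hj Hc] Hnf].
  rewrite Hj Hc /=; apply: contra Hnf; apply: fresh_full_succ => //.
  exact: exec_tau_some_late.
- by apply/subsetP => j; rewrite !inE => /andP [/andP [_ ->]].
move: HiW; rewrite inE mulSnr => /andP [/andP [Hi Hc] Hnf].
have HpT : p * T <= q * T by rewrite leq_mul2r Hq orbT.
have Hwait t : q * T <= t <= q * T + T -> ~~ fresh_full (p * T) t i.
  move=> /andP [Ht1 Ht2]; apply: contra Hnf; apply: (fresh_full_le Hi Hc _ Ht2) => t' Ht'.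
  exact: exec_tau_some_late Hi (leq_trans HpT (leq_trans Ht1 Ht')).
have Hcollect : Z \subset fresh_entries (p * T) (q * T + T) (mem i (q * T + T)).
  apply: (window_collect (P := fun t => fresh_entries (p * T) t (mem i t))) HZsend.
  move=> t /andP [Htq HtT].
  have Hsome := exec_tau_some_late Hi (leq_trans HpT Htq).
  have [Hfull|Hsub] := exec_fresh_step (p * T) Hi Hc Hsome.
    by move: (Hwait t.+1); rewrite Hfull leqW //= => /(_ HtT).
  apply: subset_trans Hsub; apply: setUS; apply/subsetP => z; rewrite inE => /andP [Hz Hzi].
  have Hza : z \notin Adv by move/subsetP: HZA => /(_ z Hz); rewrite inE.
  have Hzu : z \notin unfresh_nodes (q * T) by move/subsetP: HZW => /(_ z Hz); rewrite inE.
  have Hwin : p * T <= q * T <= t by rewrite HpT.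
  have [d Hd Hds] := fresh_sender Hza Hzu Hwin.
  have [HzJ Hrd] := regular_sender_in_Jset Hza Hzi Hd (exec_tau_le Hza Hd).
  by rewrite in_set HzJ Hrd.
move: (Hwait (q * T + T)); rewrite leq_addr leqnn => /(_ isT) /negP; apply.
exact: leq_trans HZc (subset_leq_card Hcollect).
Qed.

Lemma exec_tau_fresh i t d : i \notin Adv -> (p + #|~: sources c|) * T <= t ->
  tau i t = Some d -> d + p * T <= t.
Proof.
move=> Hi Ht Hd.
have Hiu : i \notin unfresh_nodes ((p + #|~: sources c|) * T).
  by rewrite unfresh_nodes_empty inE.
have Hwin : p * T <= (p + #|~: sources c|) * T <= t by rewrite Ht leq_mul2r leq_addr orbT.
by have [d'] := fresh_sender Hi Hiu Hwin; rewrite Hd => -[<-].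
Qed.

End Freshness.

Lemma exec_tau_bound i k d : 0 < T -> i \notin Adv -> #|~: sources c| * T <= k ->
  tau i k = Some d -> d <= 2 * (#|~: sources c| * T).
Proof.
move=> T_gt0 Hi Hk Hd; set n := #|~: sources c| in Hk *.
have [Hc|Hc] := boolP (c i == 0%R); last by move: Hd; rewrite exec_source_tau // => -[<-].
have n_gt0 : 0 < n by apply/card_gt0P; exists i; rewrite !inE Hc.
have [Hsmall|Hlarge] := leqP k (2 * (n * T)).
  exact: leq_trans (exec_tau_le Hi Hd) Hsmall.
set Q := k %/ T.
have HQ : 2 * n <= Q by rewrite leq_divRL // -mulnA ltnW.
have HQn : n <= Q - n by lia.
have HQT : (Q - n + n) * T <= k by rewrite subnK ?leq_divM //; lia.
have := exec_tau_fresh HQn Hi HQT Hd.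
have HkQ : k < Q * T + T by rewrite {1}(divn_eq k T) ltn_add2l ltn_pmod.
have HnT : T <= n * T by rewrite leq_pmull.
have H2nT : 2 * n * T <= Q * T by rewrite leq_mul2r HQ orbT.
rewrite mulnBl; move: HkQ HnT H2nT; rewrite -mulnA.
set QT := Q * T; set nT := n * T; lia.
Qed.

End Execution.

Local Open Scope ring_scope.

Theorem lemma6 (R : realFieldType) (N f : nat) (a : R) (c L : 'I_N -> R)
    (G : nat -> rel 'I_N) (T : nat) :
  jointly_strongly_robust_with G (sources c) (3 * f).+1 T ->
  forall (Adv : {set 'I_N}), (#|Adv| <= f)%N ->
  forall (xs : nat -> R) (msgs : nat -> 'I_N -> 'I_N -> message R)
         (xh : 'I_N -> nat -> R) (tau : 'I_N -> nat -> option nat)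
         (mem : 'I_N -> nat -> memory R N),
  execution f a c L G Adv xs msgs xh tau mem ->
  forall i : 'I_N, i \notin Adv ->
  forall k : nat, ((N - #|sources c|) * T <= k)%N ->
    tau i k <> None /\
    (forall d : nat, tau i k = Some d ->
       (d <= 2 * ((N - #|sources c|) * T))%N).
Proof.
move=> [T_gt0 robust] Adv Adv_le xs msgs xh tau mem exec i Hi k.
have -> : (N - #|sources c|)%N = #|~: sources c| by rewrite [RHS]cardsCs setCK card_ord.
move=> Hk; split; first exact: (exec_tau_some exec robust Adv_le Hi Hk).
by move=> d; apply: (exec_tau_bound exec robust Adv_le T_gt0 Hi Hk).
Qed.
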